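(* Let $\nu\in(-1,-1/2)$ and $\gamma_\nu=-1/2-\nu$. Then there exist constants $C,c>0$ such that for all $t>0$ and $x,y>0$, $$p_t^\nu(x,y)\le C\Big[\frac{1}{\sqrt t}\exp\Big(-\frac{|x-y|^2}{ct}\Big)+\frac1x\Big(\frac xy\Big)^{\gamma_\nu}\chi_{\{y<x/2\}}+\frac1y\Big(\frac yx\Big)^{\gamma_\nu}\chi_{\{x/2\le y\}}\Big].$$
   Context: For $\nu>-1$, $p_t^\nu(x,y)$ denotes the integral kernel of the heat semigroup $e^{-t\mathcal L_\nu}$ of the one-dimensional Laguerre operator $\mathcal L_\nu$ on $(0,\infty)$ (eigenfunctions the Laguerre functions $\varphi_k^\nu$, eigenvalues $4k+2\nu+2$). Explicitly, with $r=e^{-4t}$, $p_t^\nu(x,y)=\frac{2(rxy)^{1/2}}{1-r}\exp\big(-\frac12\frac{1+r}{1-r}(x^2+y^2)\big)I_\nu\big(\frac{2r^{1/2}}{1-r}xy\big)$, where $I_\nu$ is the modified Bessel function of the first kind. $\chi_E$ is the indicator function of $E$. *)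

From Stdlib Require Import Reals.
From Coquelicot Require Import Coquelicot.
Open Scope R_scope.

Definition Gamma (s : R) : R :=
  RInt_gen (fun u => Rpower u (s - 1) * exp (- u)) (at_right 0) (Rbar_locally p_infty).

Definition BesselI (nu z : R) : R :=
  Series (fun k : nat =>
    Rpower (z / 2) (2 * INR k + nu) / (INR (Factorial.fact k) * Gamma (INR k + nu + 1))).

Definition laguerre_heat_kernel (nu t x y : R) : R :=
  let r := exp (-4 * t) in
  2 * sqrt (r * x * y) / (1 - r)
    * exp (- (1/2) * ((1 + r) / (1 - r)) * (x ^ 2 + y ^ 2))
    * BesselI nu (2 * sqrt r / (1 - r) * x * y).

Definition chi {P : Prop} (d : {P} + {~ P}) : R := if d then 1 else 0.

(* Comparing [Gamma (k + nu + 1)] with [Gamma (k + 1/2)] through [Gamma (s + g) <= 2 s^g Gamma s]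
   (0 <= g <= 1) dominates the k-th term of the series of [I_nu] by the 2k-th term of an
   exponential series, so that [I_nu z <= C e^z (z^nu + z^(-1/2))] for all [z > 0].
   With [m = 1 / sinh (2t) <= 1/t], the kernel is [m sqrt(xy) e^(-coth(2t) (x^2+y^2)/2) I_nu (m x y)],
   and completing the square turns [e^(-coth(2t)(x^2+y^2)/2 + mxy)] into at most [e^(-(x-y)^2/(8t))].
   The [z^(-1/2)] part then gives the Gaussian term, and the [z^nu] part gives the weight
   [t^(-(1+nu)) (xy)^(1/2+nu)] times that Gaussian: if [y < x/2] or [y >= 2x] the Gaussian absorbs the
   power of [x^2/t] (resp. [y^2/t]) and leaves a singular term; otherwise either [y^2 <= t] and the
   weight is below the second singular term, or [xy >= t/2] and it is below [2/sqrt t]. *)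

From Stdlib Require Import Reals Lra Lia Factorial Classical.
From Coquelicot Require Import Coquelicot.
Open Scope R_scope.

Lemma exp_le_compat x y : x <= y -> exp x <= exp y.
Proof. intros [H|H]; [left; apply exp_increasing; exact H | rewrite H; right; reflexivity]. Qed.

Definition exp_term (z : R) (n : nat) : R := z ^ n / INR (fact n).

Lemma exp_term_ge0 z n : 0 <= z -> 0 <= exp_term z n.
Proof. intros Hz. apply Rdiv_le_0_compat; [apply pow_le; exact Hz | apply INR_fact_lt_0]. Qed.

Lemma sum_exp_term_le_exp z N : 0 <= z -> sum_f_R0 (exp_term z) N <= exp z.
Proof. exact (exp_ge_taylor z N). Qed.

Lemma exp_term_le_exp z n : 0 <= z -> exp_term z n <= exp z.
Proof.
  intros Hz. eapply Rle_trans; [|apply (sum_exp_term_le_exp z n Hz)].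
  destruct n as [|n]; [simpl; lra|].
  rewrite tech5.
  assert (0 <= sum_f_R0 (exp_term z) n) by (apply cond_pos_sum; intro; apply exp_term_ge0, Hz).
  lra.
Qed.

Lemma Rpower_1_l e : Rpower 1 e = 1.
Proof. unfold Rpower. rewrite ln_1, Rmult_0_r. apply exp_0. Qed.

Lemma Rpower_succ u e : 0 < u -> Rpower u (e + 1) = u * Rpower u e.
Proof. intros Hu. rewrite Rpower_plus, Rpower_1 by exact Hu. ring. Qed.

Lemma Rpower_inv t e : 0 < t -> Rpower (/ t) e = Rpower t (- e).
Proof. intros Ht. unfold Rpower. rewrite ln_Rinv by exact Ht. f_equal. ring. Qed.

Lemma Rpower_neg_half t : 0 < t -> Rpower t (- (1/2)) = / sqrt t.
Proof.
  intros Ht. rewrite Rpower_Ropp, <- Rpower_sqrt by exact Ht.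
  replace (1/2) with (/2) by field. reflexivity.
Qed.

Lemma Rpower_le_contravar M u e : 0 < M -> M <= u -> e <= 0 -> Rpower u e <= Rpower M e.
Proof.
  intros HM Hu He. unfold Rpower. apply exp_le_compat.
  assert (ln M <= ln u) by (apply ln_le; lra). nra.
Qed.

Lemma Rpower_le_of_le_inv m t e : 0 < m -> 0 < t -> m <= / t -> 0 <= e ->
  Rpower m e <= Rpower t (- e).
Proof.
  intros Hm Ht Hmt He.
  rewrite <- Rpower_inv by assumption. apply Rle_Rpower_l; lra.
Qed.

Lemma Rpower_le_split u M g : 0 < u -> 0 < M -> 0 <= g <= 1 ->
  Rpower u g <= Rpower M g + u * Rpower M (g - 1).
Proof.
  intros Hu HM Hg. pose proof (exp_pos (g * ln M)). pose proof (exp_pos ((g - 1) * ln M)).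
  fold (Rpower M g) (Rpower M (g - 1)) in *.
  destruct (Rle_lt_dec u M) as [Hc|Hc].
  - assert (Rpower u g <= Rpower M g) by (apply Rle_Rpower_l; lra). nra.
  - replace g with ((g - 1) + 1) at 1 by ring. rewrite Rpower_succ by exact Hu.
    assert (Rpower u (g - 1) <= Rpower M (g - 1)) by (apply Rpower_le_contravar; lra). nra.
Qed.

Lemma Rpower_half_le z e : 0 < z -> -1 <= e <= 0 -> Rpower (z / 2) e <= 2 * Rpower z e.
Proof.
  intros Hz He. unfold Rdiv. rewrite <- Rpower_mult_distr, Rpower_inv by lra.
  rewrite Rmult_comm. apply Rmult_le_compat_r; [left; apply exp_pos|].
  rewrite <- (Rpower_1 2) at 2 by lra. apply Rle_Rpower; lra.
Qed.

Lemma Rpower_mul_exp_le u b : 0 < u -> 0 <= b <= 1 -> Rpower u b * exp (- u / 32) <= 32.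
Proof.
  intros Hu Hb.
  assert (H1 : Rpower u b <= 1 + u).
  { destruct (Rle_lt_dec u 1).
    - assert (Rpower u b <= Rpower 1 b) by (apply Rle_Rpower_l; lra). rewrite Rpower_1_l in H. lra.
    - assert (Rpower u b <= Rpower u 1) by (apply Rle_Rpower; lra). rewrite Rpower_1 in H; lra. }
  pose proof (exp_ineq1_le (u / 32)). pose proof (exp_pos (- u / 32)).
  assert (E : exp (u / 32) * exp (- u / 32) = 1)
    by (rewrite <- exp_plus; replace (u / 32 + - u / 32) with 0 by field; apply exp_0).
  nra.
Qed.

Section NonnegativeIntegral.
Variable f : R -> R.
Hypothesis f_cont : forall u, 0 < u -> continuous f u.
Hypothesis f_ge0 : forall u, 0 < u -> 0 <= f u.

Lemma ex_RInt_pos a b : 0 < a -> a <= b -> ex_RInt f a b.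
Proof.
  intros Ha Hab. apply (ex_RInt_continuous (V:=R_CompleteNormedModule)). intros z Hz.
  rewrite Rmin_left in Hz by lra. apply f_cont. lra.
Qed.

Lemma RInt_pos_ge0 a b : 0 < a -> a <= b -> 0 <= RInt f a b.
Proof. intros. apply RInt_ge_0; auto. apply ex_RInt_pos; auto. intros; apply f_ge0; lra. Qed.

Lemma RInt_pos_le_widen a' a b b' : 0 < a' -> a' <= a -> a <= b -> b <= b' ->
  RInt f a b <= RInt f a' b'.
Proof.
  intros.
  rewrite <- (RInt_Chasles (V:=R_CompleteNormedModule) f a' a b') by (apply ex_RInt_pos; lra).
  rewrite <- (RInt_Chasles (V:=R_CompleteNormedModule) f a b b') by (apply ex_RInt_pos; lra).
  assert (0 <= RInt f a' a) by (apply RInt_pos_ge0; lra).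
  assert (0 <= RInt f b b') by (apply RInt_pos_ge0; lra).
  change plus with Rplus. lra.
Qed.

Lemma is_RInt_gen_sup B :
  (forall a b, 0 < a -> a <= b -> RInt f a b <= B) ->
  exists l, is_RInt_gen f (at_right 0) (Rbar_locally p_infty) l /\
   (forall a b, 0 < a -> a <= b -> RInt f a b <= l) /\
   (forall M, (forall a b, 0 < a -> a <= b -> RInt f a b <= M) -> l <= M).
Proof.
  intros HB.
  set (E := fun v => exists a b, 0 < a /\ a <= b /\ v = RInt f a b).
  assert (Hb : bound E) by (exists B; intros v [a [b [Ha [Hab ->]]]]; apply HB; auto).
  assert (Hne : exists v, E v) by (exists (RInt f 1 1), 1, 1; repeat split; lra).
  destruct (completeness E Hb Hne) as [l [Hub Hlub]].
  assert (Hle : forall a b, 0 < a -> a <= b -> RInt f a b <= l)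
    by (intros a b Ha Hab; apply Hub; exists a, b; auto).
  exists l. split; [|split; [exact Hle|]].
  2:{ intros M HM. apply Hlub. intros v [a [b [Ha [Hab ->]]]]. apply HM; auto. }
  intros P [eps Heps].
  assert (Hex : exists a0 b0, 0 < a0 /\ a0 <= b0 /\ l - eps < RInt f a0 b0).
  { apply NNPP. intro Hn.
    assert (l <= l - eps).
    { apply Hlub. intros v [a [b [Ha [Hab ->]]]].
      apply Rnot_lt_le. intro Hc. apply Hn. exists a, b. auto. }
    destruct eps; simpl in *; lra. }
  destruct Hex as [a0 [b0 [Ha0 [Hab0 Hlt]]]].
  apply (Filter_prod _ _ _ (fun a => 0 < a < a0) (fun b => b0 < b)).
  - exists (mkposreal a0 Ha0). intros y Hy Hy0. simpl.
    unfold ball in Hy; simpl in Hy; unfold AbsRing_ball, abs, minus, plus, opp in Hy; simpl in Hy.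
    apply Rabs_lt_between in Hy. lra.
  - exists b0. auto.
  - intros a b Ha Hb'. simpl in *. exists (RInt f a b). split.
    + apply (RInt_correct (V:=R_CompleteNormedModule)). apply ex_RInt_pos; lra.
    + apply Heps. unfold ball; simpl; unfold AbsRing_ball, abs, minus, plus, opp; simpl.
      assert (RInt f a0 b0 <= RInt f a b) by (apply RInt_pos_le_widen; lra).
      assert (RInt f a b <= l) by (apply Hle; lra).
      apply Rabs_lt_between. destruct eps; simpl in *; lra.
Qed.

End NonnegativeIntegral.

Definition gamma_integrand (s u : R) : R := Rpower u (s - 1) * exp (- u).

Lemma is_derive_Rpower u e : 0 < u -> is_derive (fun v => Rpower v e) u (e * Rpower u (e - 1)).
Proof. intros Hu. apply is_derive_Reals, derivable_pt_lim_power, Hu. Qed.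

Lemma continuous_Rpower u e : 0 < u -> continuous (fun v => Rpower v e) u.
Proof.
  intros Hu. apply (ex_derive_continuous (K:=R_AbsRing) (V:=R_NormedModule)).
  eexists. apply is_derive_Rpower, Hu.
Qed.

Lemma continuous_exp_scal c u : continuous (fun v => exp (c * v)) u.
Proof.
  apply (ex_derive_continuous (K:=R_AbsRing) (V:=R_NormedModule) (fun v => exp (c * v))).
  auto_derive. exact I.
Qed.

Lemma continuous_mul_exp_half M u : continuous (fun v => M * exp (- v / 2)) u.
Proof.
  apply (continuous_scal_r (V:=R_NormedModule) M (fun v => exp (- v / 2))).
  apply (continuous_ext (fun v => exp (- / 2 * v))); [intro; f_equal; field|].
  apply continuous_exp_scal.
Qed.

Lemma continuous_gamma_integrand s u : 0 < u -> continuous (gamma_integrand s) u.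
Proof.
  intros Hu. apply (continuous_mult (fun v => Rpower v (s - 1)) (fun v => exp (- v))).
  - apply continuous_Rpower, Hu.
  - apply (continuous_ext (fun v => exp (-1 * v))); [intro; f_equal; ring|].
    apply continuous_exp_scal.
Qed.

Lemma gamma_integrand_pos s u : 0 < gamma_integrand s u.
Proof. apply Rmult_lt_0_compat; apply exp_pos. Qed.

Lemma gamma_integrand_succ s u : gamma_integrand (s + 1) u = Rpower u s * exp (- u).
Proof. unfold gamma_integrand. replace (s + 1 - 1) with s by ring. reflexivity. Qed.

Lemma ex_RInt_gamma_integrand s a b : 0 < a -> a <= b -> ex_RInt (gamma_integrand s) a b.
Proof. apply ex_RInt_pos. intros; apply continuous_gamma_integrand; assumption. Qed.

Lemma RInt_gamma_integrand_le_widen s a' a b b' : 0 < a' -> a' <= a -> a <= b -> b <= b' ->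
  RInt (gamma_integrand s) a b <= RInt (gamma_integrand s) a' b'.
Proof.
  apply RInt_pos_le_widen; intros; [apply continuous_gamma_integrand | left; apply gamma_integrand_pos];
  assumption.
Qed.

Lemma RInt_Rpower a b s : 0 < a -> a <= b -> 0 < s ->
  RInt (fun u => Rpower u (s - 1)) a b = (Rpower b s - Rpower a s) / s.
Proof.
  intros Ha Hab Hs.
  apply (is_RInt_unique (V:=R_CompleteNormedModule)).
  replace ((Rpower b s - Rpower a s) / s) with (minus (Rpower b s / s) (Rpower a s / s))
    by (unfold minus, plus, opp; simpl; field; lra).
  apply (is_RInt_derive (V:=R_CompleteNormedModule) (fun u => Rpower u s / s)).
  - intros x Hx. rewrite Rmin_left in Hx by lra.
    replace (Rpower x (s - 1)) with (/ s * (s * Rpower x (s - 1))) by (field; lra).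
    apply (is_derive_ext (fun u => / s * Rpower u s)); [intro; apply Rmult_comm|].
    apply is_derive_scal, is_derive_Rpower. lra.
  - intros x Hx. rewrite Rmin_left in Hx by lra. apply continuous_Rpower. lra.
Qed.

Lemma RInt_exp_half a b M : RInt (fun u => M * exp (- u / 2)) a b
   = -2 * M * exp (- b / 2) - -2 * M * exp (- a / 2).
Proof.
  apply (is_RInt_unique (V:=R_CompleteNormedModule)).
  apply (is_RInt_derive (V:=R_CompleteNormedModule) (fun u => -2 * M * exp (- u / 2))).
  - intros x _. auto_derive; [exact I|].
    replace (- x * / 2) with (- x / 2) by reflexivity. set (e := exp (- x / 2)). field.
  - intros x _. apply continuous_mul_exp_half.
Qed.

Lemma gamma_integrand_le_exp_half s : exists M, 0 < M /\
  forall u, 1 <= u -> gamma_integrand s u <= M * exp (- u / 2).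
Proof.
  destruct (INR_unbounded s) as [n Hn].
  exists (2 ^ n * INR (fact n)).
  split; [apply Rmult_lt_0_compat; [apply pow_lt; lra | apply INR_fact_lt_0]|].
  intros u Hu.
  assert (H1 : Rpower u (s - 1) <= u ^ n) by (rewrite <- Rpower_pow by lra; apply Rle_Rpower; lra).
  assert (H2 : (u / 2) ^ n / INR (fact n) <= exp (u / 2)) by (apply (exp_term_le_exp (u / 2) n); lra).
  assert (H3 : u ^ n = 2 ^ n * (u / 2) ^ n) by (rewrite <- Rpow_mult_distr; f_equal; field).
  assert (H4 : u ^ n <= 2 ^ n * INR (fact n) * exp (u / 2)).
  { rewrite H3, Rmult_assoc. apply Rmult_le_compat_l; [apply pow_le; lra|].
    pose proof (INR_fact_lt_0 n).
    apply (Rmult_le_reg_r (/ INR (fact n))); [apply Rinv_0_lt_compat; lra|].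
    replace (INR (fact n) * exp (u / 2) * / INR (fact n)) with (exp (u / 2)) by (field; lra).
    exact H2. }
  assert (E : exp (u / 2) * exp (- u) = exp (- u / 2))
    by (rewrite <- exp_plus; f_equal; field).
  pose proof (exp_pos (- u)). unfold gamma_integrand.
  rewrite <- E, <- Rmult_assoc. apply Rmult_le_compat_r; lra.
Qed.

Lemma RInt_gamma_integrand_bounded s : 0 < s ->
  exists B, forall a b, 0 < a -> a <= b -> RInt (gamma_integrand s) a b <= B.
Proof.
  intros Hs. destruct (gamma_integrand_le_exp_half s) as [M [HM0 HM]].
  exists (1 / s + 2 * M). intros a b Ha Hab.
  set (a' := Rmin a 1). set (b' := Rmax b 1).
  assert (Ha' : 0 < a') by (apply Rmin_glb_lt; lra).
  assert (Ha1 : a' <= 1) by apply Rmin_r. assert (Hb1 : 1 <= b') by apply Rmax_r.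
  apply Rle_trans with (RInt (gamma_integrand s) a' b');
    [apply RInt_gamma_integrand_le_widen; [exact Ha' | apply Rmin_l | exact Hab | apply Rmax_l]|].
  rewrite <- (RInt_Chasles (V:=R_CompleteNormedModule) _ a' 1 b')
    by (apply ex_RInt_gamma_integrand; lra).
  change plus with Rplus.
  assert (Hlow : RInt (gamma_integrand s) a' 1 <= 1 / s).
  { apply Rle_trans with (RInt (fun u => Rpower u (s - 1)) a' 1).
    - apply RInt_le; [exact Ha1 | apply ex_RInt_gamma_integrand; lra | |].
      + apply (ex_RInt_continuous (V:=R_CompleteNormedModule)). intros z Hz.
        rewrite Rmin_left in Hz by lra. apply continuous_Rpower. lra.
      + intros x Hx. unfold gamma_integrand. pose proof (exp_pos ((s - 1) * ln x)).
        assert (exp (- x) <= 1) by (rewrite <- exp_0; apply exp_le_compat; lra).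
        fold (Rpower x (s - 1)) in *. nra.
    - rewrite RInt_Rpower, Rpower_1_l by lra. pose proof (exp_pos (s * ln a')).
      fold (Rpower a' s) in *. unfold Rdiv.
      apply Rmult_le_compat_r; [left; apply Rinv_0_lt_compat|]; lra. }
  assert (Hhigh : RInt (gamma_integrand s) 1 b' <= 2 * M).
  { apply Rle_trans with (RInt (fun u => M * exp (- u / 2)) 1 b').
    - apply RInt_le; [exact Hb1 | apply ex_RInt_gamma_integrand; lra | |].
      + apply (ex_RInt_continuous (V:=R_CompleteNormedModule)). intros z _.
        apply continuous_mul_exp_half.
      + intros x Hx. apply HM. lra.
    - rewrite RInt_exp_half. pose proof (exp_pos (- b' / 2)).
      assert (exp (- (1) / 2) <= exp 0) by (apply exp_le_compat; lra).
      rewrite exp_0 in H0.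
      assert (0 <= M * (1 - exp (- (1) / 2))) by (apply Rmult_le_pos; lra).
      assert (0 <= M * exp (- b' / 2)) by (apply Rmult_le_pos; lra).
      lra. }
  lra.
Qed.

Lemma Gamma_lub s : 0 < s ->
  (forall a b, 0 < a -> a <= b -> RInt (gamma_integrand s) a b <= Gamma s) /\
  (forall M, (forall a b, 0 < a -> a <= b -> RInt (gamma_integrand s) a b <= M) -> Gamma s <= M).
Proof.
  intros Hs. destruct (RInt_gamma_integrand_bounded s Hs) as [B HB].
  destruct (is_RInt_gen_sup (gamma_integrand s) (continuous_gamma_integrand s)
              (fun u _ => Rlt_le _ _ (gamma_integrand_pos s u)) B HB) as [l [Hl Hlub]].
  replace (Gamma s) with l; [exact Hlub|]. symmetry. unfold Gamma.
  apply (is_RInt_gen_unique (V:=R_CompleteNormedModule) (Fa := at_right 0)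
     (Fb := Rbar_locally p_infty)
     (FFa := Proper_StrongProper _ (at_right_proper_filter 0))
     (FFb := Proper_StrongProper _ (Rbar_locally_filter p_infty))).
  exact Hl.
Qed.

Lemma RInt_le_Gamma s a b : 0 < s -> 0 < a -> a <= b -> RInt (gamma_integrand s) a b <= Gamma s.
Proof. intros Hs. apply (proj1 (Gamma_lub s Hs)). Qed.

Lemma Gamma_le s M : 0 < s ->
  (forall a b, 0 < a -> a <= b -> RInt (gamma_integrand s) a b <= M) -> Gamma s <= M.
Proof. intros Hs. apply (proj2 (Gamma_lub s Hs)). Qed.

Lemma Gamma_pos s : 0 < s -> 0 < Gamma s.
Proof.
  intros Hs. apply Rlt_le_trans with (RInt (gamma_integrand s) 1 2); [|apply RInt_le_Gamma; lra].
  apply RInt_gt_0; [lra | intros; apply gamma_integrand_pos | intros; apply continuous_gamma_integrand; lra].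
Qed.

Lemma Gamma_le_lincomb s1 s2 s3 al be : 0 < s1 -> 0 < s2 -> 0 < s3 -> 0 <= al -> 0 <= be ->
  (forall u, 0 < u -> gamma_integrand s1 u <= al * gamma_integrand s2 u + be * gamma_integrand s3 u) ->
  Gamma s1 <= al * Gamma s2 + be * Gamma s3.
Proof.
  intros H1 H2 H3 Hal Hbe Hpt. apply Gamma_le; [exact H1|]. intros a b Ha Hab.
  pose proof (ex_RInt_gamma_integrand s2 a b Ha Hab) as E2.
  pose proof (ex_RInt_gamma_integrand s3 a b Ha Hab) as E3.
  apply Rle_trans with
    (RInt (fun u => plus (scal al (gamma_integrand s2 u)) (scal be (gamma_integrand s3 u))) a b).
  - apply RInt_le; [exact Hab | apply ex_RInt_gamma_integrand; assumption | |].
    + apply (ex_RInt_plus (V:=R_NormedModule)); apply (ex_RInt_scal (V:=R_NormedModule)); assumption.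
    + intros x Hx. apply Hpt. lra.
  - rewrite (RInt_plus (V:=R_CompleteNormedModule))
      by (apply (ex_RInt_scal (V:=R_NormedModule)); assumption).
    rewrite !(RInt_scal (V:=R_CompleteNormedModule)) by assumption.
    change plus with Rplus. change scal with Rmult. unfold mult; simpl.
    assert (RInt (gamma_integrand s2) a b <= Gamma s2) by (apply RInt_le_Gamma; assumption).
    assert (RInt (gamma_integrand s3) a b <= Gamma s3) by (apply RInt_le_Gamma; assumption).
    nra.
Qed.

(* Integration by parts against [-exp (-u)]. *)
Lemma RInt_gamma_integrand_succ s a b : 0 < a -> a <= b ->
  RInt (gamma_integrand (s + 1)) a b
  = Rpower a s * exp (- a) - Rpower b s * exp (- b) + s * RInt (gamma_integrand s) a b.
Proof.
  intros Ha Hab.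
  set (F := fun u => Rpower u s * (- exp (- u))).
  assert (HI : is_RInt (fun u => gamma_integrand (s + 1) u - s * gamma_integrand s u) a b
                 (minus (F b) (F a))).
  { apply (is_RInt_derive (V:=R_CompleteNormedModule) F).
    - intros x Hx. rewrite Rmin_left in Hx by lra.
      pose proof (is_derive_Rpower x s ltac:(lra)) as D1.
      assert (D2 : is_derive (fun u => - exp (- u)) x (exp (- x))) by (auto_derive; [exact I| ring]).
      replace (gamma_integrand (s + 1) x - s * gamma_integrand s x)
        with (plus (mult (s * Rpower x (s - 1)) (- exp (- x))) (mult (Rpower x s) (exp (- x))))
        by (rewrite gamma_integrand_succ; unfold gamma_integrand, plus, mult; simpl; ring).
      exact (is_derive_mult _ _ _ _ _ D1 D2 Rmult_comm).
    - intros x Hx. rewrite Rmin_left in Hx by lra.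
      apply (continuous_minus (V:=R_NormedModule)); [apply continuous_gamma_integrand; lra|].
      apply (continuous_scal_r (V:=R_NormedModule) s (gamma_integrand s)).
      apply continuous_gamma_integrand. lra. }
  pose proof (is_RInt_scal (V:=R_NormedModule) _ a b s _
    (RInt_correct (V:=R_CompleteNormedModule) _ _ _ (ex_RInt_gamma_integrand s a b Ha Hab))) as HJ.
  pose proof (is_RInt_plus (V:=R_NormedModule) _ _ _ _ _ _ HI HJ) as HK.
  apply (is_RInt_ext (V:=R_NormedModule) _ (gamma_integrand (s + 1))) in HK.
  - rewrite (is_RInt_unique (V:=R_CompleteNormedModule) _ _ _ _ HK).
    unfold F, minus, plus, opp, scal; simpl. unfold mult; simpl. ring.
  - intros x _. unfold plus, scal; simpl; unfold mult; simpl. ring.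
Qed.

Lemma Rpower_small s e a : 0 < s -> 0 < e -> 0 < a ->
  exists a', 0 < a' /\ a' <= a /\ Rpower a' s <= e.
Proof.
  intros Hs He Ha. exists (Rmin a (Rpower e (/ s))).
  assert (0 < Rmin a (Rpower e (/ s))) by (apply Rmin_glb_lt; [exact Ha | apply exp_pos]).
  split; [assumption|]. split; [apply Rmin_l|].
  apply Rle_trans with (Rpower (Rpower e (/ s)) s).
  - apply Rle_Rpower_l; [lra|]. split; [assumption | apply Rmin_r].
  - rewrite Rpower_mult, Rinv_l, Rpower_1 by lra. lra.
Qed.

Lemma Rpower_mul_exp_small s e b : 0 < e ->
  exists b', b <= b' /\ Rpower b' s * exp (- b') <= e.
Proof.
  intros He. destruct (gamma_integrand_le_exp_half (s + 1)) as [M [HM0 HM]].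
  set (b' := Rmax b (Rmax 1 (2 * ln (M / e)))).
  assert (H1 : 1 <= b') by (unfold b'; eapply Rle_trans; [|apply Rmax_r]; apply Rmax_l).
  assert (H2 : 2 * ln (M / e) <= b') by (unfold b'; eapply Rle_trans; [|apply Rmax_r]; apply Rmax_r).
  exists b'. split; [apply Rmax_l|].
  rewrite <- gamma_integrand_succ. eapply Rle_trans; [apply HM, H1|].
  assert (H3 : exp (- b' / 2) <= e / M).
  { replace (e / M) with (exp (- ln (M / e))).
    - apply exp_le_compat. lra.
    - rewrite exp_Ropp, exp_ln by (apply Rdiv_lt_0_compat; assumption). field. lra. }
  apply (Rmult_le_compat_l M) in H3; [|lra].
  replace (M * (e / M)) with e in H3 by (field; lra). exact H3.
Qed.

Lemma Gamma_succ s : 0 < s -> Gamma (s + 1) = s * Gamma s.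
Proof.
  intros Hs. apply Rle_antisym.
  - apply Gamma_le; [lra|]. intros a b Ha Hab.
    apply Rle_plus_epsilon. intros e He.
    destruct (Rpower_small s e a Hs He Ha) as [a' [Ha' [Ha'a Hpa]]].
    apply Rle_trans with (RInt (gamma_integrand (s + 1)) a' b);
      [apply RInt_gamma_integrand_le_widen; lra|].
    rewrite RInt_gamma_integrand_succ by lra.
    assert (RInt (gamma_integrand s) a' b <= Gamma s) by (apply RInt_le_Gamma; lra).
    pose proof (exp_pos (- a')). pose proof (exp_pos (- b)).
    pose proof (exp_pos (s * ln b)). pose proof (exp_pos (s * ln a')).
    fold (Rpower b s) (Rpower a' s) in *.
    assert (exp (- a') <= 1) by (rewrite <- exp_0; apply exp_le_compat; lra).
    nra.
  - assert (Hg : Gamma s <= Gamma (s + 1) / s).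
    { apply Gamma_le; [exact Hs|]. intros a b Ha Hab.
      apply Rle_plus_epsilon. intros e He.
      destruct (Rpower_mul_exp_small s (s * e) b ltac:(nra)) as [b' [Hbb Hpb]].
      apply Rle_trans with (RInt (gamma_integrand s) a b');
        [apply RInt_gamma_integrand_le_widen; lra|].
      pose proof (RInt_gamma_integrand_succ s a b' Ha ltac:(lra)) as E.
      assert (RInt (gamma_integrand (s + 1)) a b' <= Gamma (s + 1)) by (apply RInt_le_Gamma; lra).
      pose proof (exp_pos (- a)). pose proof (exp_pos (s * ln a)). fold (Rpower a s) in *.
      assert (0 <= Rpower a s * exp (- a)) by nra.
      apply (Rmult_le_reg_l s); [exact Hs|].
      replace (s * (Gamma (s + 1) / s + e)) with (Gamma (s + 1) + s * e) by (field; lra).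
      lra. }
    apply (Rmult_le_compat_l s) in Hg; [|lra].
    replace (s * (Gamma (s + 1) / s)) with (Gamma (s + 1)) in Hg by (field; lra). exact Hg.
Qed.

(* Pointwise, [u^(s+g-1) <= s^g u^(s-1) + s^(g-1) u^s]; integrate and use [Gamma (s+1) = s Gamma s]. *)
Lemma Gamma_shift_le s g : 0 < s -> 0 <= g <= 1 -> Gamma (s + g) <= 2 * Rpower s g * Gamma s.
Proof.
  intros Hs Hg.
  assert (Hsg : Rpower s (g - 1) * s = Rpower s g).
  { rewrite Rmult_comm, <- Rpower_succ by exact Hs. f_equal. ring. }
  assert (H := Gamma_le_lincomb (s + g) s (s + 1) (Rpower s g) (Rpower s (g - 1))
    ltac:(lra) Hs ltac:(lra) (Rlt_le _ _ (exp_pos _)) (Rlt_le _ _ (exp_pos _))).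
  rewrite Gamma_succ, <- Rmult_assoc, Hsg in H by exact Hs.
  replace (2 * Rpower s g * Gamma s) with (Rpower s g * Gamma s + Rpower s g * Gamma s) by ring.
  apply H. intros u Hu. rewrite gamma_integrand_succ. unfold gamma_integrand.
  replace (s + g - 1) with (g + (s - 1)) by ring.
  rewrite Rpower_plus.
  replace s with ((s - 1) + 1) at 5 by ring. rewrite Rpower_succ by exact Hu.
  pose proof (exp_pos ((s - 1) * ln u)). pose proof (exp_pos (- u)).
  fold (Rpower u (s - 1)) in *.
  assert (Hsplit := Rpower_le_split u s g Hu Hs Hg).
  replace (Rpower s g * (Rpower u (s - 1) * exp (- u)) + Rpower s (g - 1) * (u * Rpower u (s - 1) * exp (- u)))
    with ((Rpower s g + u * Rpower s (g - 1)) * (Rpower u (s - 1) * exp (- u))) by ring.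
  rewrite Rmult_assoc. apply Rmult_le_compat_r; [nra | exact Hsplit].
Qed.

Lemma Gamma_half_int k : Gamma (INR k + 1/2) * 4 ^ k * INR (fact k) = Gamma (1/2) * INR (fact (2 * k)).
Proof.
  induction k as [|k IHk].
  - simpl. replace (0 + 1/2) with (1/2) by ring. ring.
  - rewrite S_INR. replace (INR k + 1 + 1/2) with ((INR k + 1/2) + 1) by ring.
    rewrite Gamma_succ by (pose proof (pos_INR k); lra).
    replace (2 * S k)%nat with (S (S (2 * k))) by lia.
    rewrite !fact_simpl, !mult_INR, !S_INR, mult_INR.
    replace (INR 2) with 2 by reflexivity.
    replace (Gamma (1 / 2) * ((2 * INR k + 1 + 1) * ((2 * INR k + 1) * INR (fact (2 * k)))))
      with ((2 * INR k + 1 + 1) * (2 * INR k + 1) * (Gamma (1/2) * INR (fact (2 * k)))) by ring.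
    rewrite <- IHk. simpl. field.
Qed.

Lemma ex_series_even_le (a : nat -> R) B : (forall n, 0 <= a n) -> (forall N, sum_f_R0 a N <= B) ->
  ex_series (fun k => a (2 * k)%nat) /\ Series (fun k => a (2 * k)%nat) <= B.
Proof.
  intros Ha HB.
  assert (Hle : forall N, sum_f_R0 (fun k => a (2 * k)%nat) N <= B).
  { intro N. eapply Rle_trans; [|apply (HB (2 * N)%nat)].
    induction N as [|N IH]; [simpl; lra|].
    replace (2 * S N)%nat with (S (S (2 * N))) by lia.
    rewrite tech5, (tech5 a (S (2 * N))), (tech5 a (2 * N)).
    replace (2 * S N)%nat with (S (S (2 * N))) by lia. pose proof (Ha (S (2 * N))). lra. }
  assert (Hg : Un_growing (sum_f_R0 (fun k => a (2 * k)%nat)))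
    by (intro n; rewrite tech5; pose proof (Ha (2 * S n)%nat); lra).
  assert (Hb : has_ub (sum_f_R0 (fun k => a (2 * k)%nat))) by (exists B; intros x [n ->]; apply Hle).
  destruct (growing_cv _ Hg Hb) as [l Hl].
  assert (His : is_series (fun k => a (2 * k)%nat) l) by (apply is_series_Reals; exact Hl).
  split; [exists l; exact His|].
  rewrite (is_series_unique _ _ His).
  apply (Rle_cv_lim (Vn := fun _ => B) Hle Hl).
  intros e He. exists 0%nat. intros. unfold R_dist. rewrite Rminus_diag, Rabs_R0. exact He.
Qed.

Lemma sum_mul_exp_term z N :
  sum_f_R0 (fun n => INR n * exp_term z n) (S N) = z * sum_f_R0 (exp_term z) N.
Proof.
  induction N as [|N IH].
  - simpl. unfold exp_term. simpl. field.
  - rewrite tech5, IH, (tech5 (exp_term z)). unfold exp_term.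
    rewrite (fact_simpl (S N)), mult_INR, (S_INR (S N)).
    replace (z ^ S (S N)) with (z * z ^ S N) by reflexivity.
    pose proof (INR_fact_lt_0 (S N)). pose proof (pos_INR (S N)).
    field. split; lra.
Qed.

Lemma sum_mul_exp_term_le z N : 0 <= z ->
  sum_f_R0 (fun n => INR n * exp_term z n) N <= z * exp z.
Proof.
  intros Hz. destruct N as [|N].
  - simpl. rewrite Rmult_0_l. pose proof (exp_pos z). nra.
  - rewrite sum_mul_exp_term. apply Rmult_le_compat_l; [exact Hz|]. apply sum_exp_term_le_exp, Hz.
Qed.

Section BesselBound.
Variable nu : R.
Hypothesis nu_gt : -1 < nu.
Hypothesis nu_le : nu <= -1/2.

(* Compare [Gamma (k + nu + 1)] with [Gamma (k + 1/2) = Gamma (1/2) (2k)! / (4^k k!)] via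
   [Gamma_shift_le]: the k-th term is dominated by the [2k]-th term of the exponential series. *)
Lemma BesselI_term_le z k : 0 < z ->
  Rpower (z / 2) (2 * INR k + nu) / (INR (fact k) * Gamma (INR k + nu + 1))
  <= 2 / Gamma (1/2) * Rpower (z / 2) nu
     * (exp_term z (2 * k) * Rpower (INR k + nu + 1) (-1/2 - nu)).
Proof.
  intros Hz. set (s := INR k + nu + 1). set (gam := -1/2 - nu).
  assert (Hs : 0 < s) by (unfold s; pose proof (pos_INR k); lra).
  assert (Hsp := Gamma_shift_le s gam Hs ltac:(unfold gam; lra)).
  replace (s + gam) with (INR k + 1/2) in Hsp by (unfold s, gam; field).
  assert (Hh := Gamma_half_int k).
  assert (Hg12 := Gamma_pos (1/2) ltac:(lra)).
  assert (Hgs := Gamma_pos s Hs).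
  assert (Hgk := Gamma_pos (INR k + 1/2) ltac:(pose proof (pos_INR k); lra)).
  pose proof (INR_fact_lt_0 k) as Hfk. pose proof (INR_fact_lt_0 (2 * k)) as Hf2k.
  assert (H4 : 0 < 4 ^ k) by (apply pow_lt; lra).
  set (ps := Rpower s gam) in *. assert (Hps : 0 < ps) by apply exp_pos.
  set (D := Gamma (1/2) * INR (fact (2 * k)) / (4 ^ k * 2 * ps)).
  assert (HD0 : 0 < D) by (unfold D; apply Rmult_lt_0_compat; [nra | apply Rinv_0_lt_compat; nra]).
  assert (HD : D <= INR (fact k) * Gamma s).
  { unfold D. rewrite <- Hh.
    apply (Rmult_le_reg_r (4 ^ k * 2 * ps)); [nra|].
    replace (Gamma (INR k + 1 / 2) * 4 ^ k * INR (fact k) / (4 ^ k * 2 * ps) * (4 ^ k * 2 * ps))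
      with (Gamma (INR k + 1 / 2) * (4 ^ k * INR (fact k))) by (field; lra).
    replace (INR (fact k) * Gamma s * (4 ^ k * 2 * ps))
      with (2 * ps * Gamma s * (4 ^ k * INR (fact k))) by ring.
    apply Rmult_le_compat_r; nra. }
  assert (Hpz : Rpower (z / 2) (2 * INR k + nu) = Rpower (z / 2) nu * (z / 2) ^ (2 * k)).
  { rewrite <- Rpower_pow, <- Rpower_plus by lra. f_equal. rewrite mult_INR. simpl. ring. }
  assert (Hzz : (z / 2) ^ (2 * k) * 4 ^ k = z ^ (2 * k)).
  { rewrite pow_mult. replace 4 with (2 ^ 2) by ring.
    rewrite <- !pow_mult, <- Rpow_mult_distr. f_equal. field. }
  set (A := Rpower (z / 2) (2 * INR k + nu)).
  assert (HA : 0 < A) by apply exp_pos.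
  apply Rle_trans with (A / D).
  - unfold Rdiv. apply Rmult_le_compat_l; [lra|]. apply Rinv_le_contravar; assumption.
  - unfold A, D. rewrite Hpz. unfold exp_term. fold ps.
    right. rewrite <- Hzz. field. repeat split; lra.
Qed.

(* With [P = (1+z)^gam] and [Q = (1+z)^(gam-1)], [Rpower_le_split] dominates the k-th term by the
   2k-th term of [sum (P + (1 + n/2) Q) z^n / n!], whose sum is at most [(P + Q (1+z)) e^z = 2 P e^z]. *)
Lemma BesselI_le_Rpower_exp z : 0 < z ->
  BesselI nu z <= 2 / Gamma (1/2) * Rpower (z / 2) nu * (2 * Rpower (1 + z) (-1/2 - nu) * exp z).
Proof.
  intros Hz. set (gam := -1/2 - nu).
  set (P := Rpower (1 + z) gam). set (Q := Rpower (1 + z) (gam - 1)).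
  assert (HP : 0 < P) by apply exp_pos. assert (HQ : 0 < Q) by apply exp_pos.
  assert (HPQ : Q * (1 + z) = P).
  { unfold P, Q. replace gam with ((gam - 1) + 1) at 2 by ring. rewrite Rpower_succ; lra. }
  set (a := fun n => exp_term z n * (P + (1 + INR n / 2) * Q)).
  assert (Ha : forall n, 0 <= a n).
  { intro n. unfold a. apply Rmult_le_pos; [apply exp_term_ge0; lra|]. pose proof (pos_INR n). nra. }
  assert (Hsum : forall N, sum_f_R0 a N
            = (P + Q) * sum_f_R0 (exp_term z) N + Q / 2 * sum_f_R0 (fun n => INR n * exp_term z n) N).
  { induction N as [|N IH]; [simpl; unfold a; simpl; field|]. rewrite !tech5, IH. unfold a. field. }
  assert (Hbd : forall N, sum_f_R0 a N <= (P + Q) * exp z + Q / 2 * (z * exp z)).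
  { intro N. rewrite Hsum.
    pose proof (sum_exp_term_le_exp z N ltac:(lra)). pose proof (sum_mul_exp_term_le z N ltac:(lra)).
    apply Rplus_le_compat; apply Rmult_le_compat_l; lra. }
  destruct (ex_series_even_le a _ Ha Hbd) as [Hex Hle].
  set (C := 2 / Gamma (1/2) * Rpower (z / 2) nu).
  assert (HC : 0 < C).
  { pose proof (Gamma_pos (1/2) ltac:(lra)). pose proof (exp_pos (nu * ln (z / 2))).
    apply Rmult_lt_0_compat; [apply Rdiv_lt_0_compat; lra | assumption]. }
  unfold BesselI.
  apply Rle_trans with (Series (fun k => C * a (2 * k)%nat)).
  - apply Series_le; [|apply (ex_series_scal_l (K:=R_AbsRing) (V:=R_NormedModule) C _ Hex)].
    intro k. split.
    + pose proof (INR_fact_lt_0 k).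
      assert (0 < Gamma (INR k + nu + 1)) by (apply Gamma_pos; pose proof (pos_INR k); lra).
      apply Rdiv_le_0_compat; [left; apply exp_pos | nra].
    + eapply Rle_trans; [apply BesselI_term_le, Hz|]. fold C gam.
      apply Rmult_le_compat_l; [lra|]. unfold a.
      apply Rmult_le_compat_l; [apply exp_term_ge0; lra|].
      eapply Rle_trans; [apply (Rpower_le_split _ (1 + z)); pose proof (pos_INR k); unfold gam; lra|].
      fold P Q. rewrite mult_INR. replace (INR 2 * INR k / 2) with (INR k) by (simpl; field).
      apply Rplus_le_compat_l, Rmult_le_compat_r; lra.
  - rewrite Series_scal_l. apply Rle_trans with (C * ((P + Q) * exp z + Q / 2 * (z * exp z))).
    + apply Rmult_le_compat_l; lra.
    + apply Rmult_le_compat_l; [lra|]. pose proof (exp_pos z).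
      rewrite <- HPQ. assert (0 <= Q * exp z * z) by (apply Rmult_le_pos; nra). nra.
Qed.

Lemma BesselI_le z : 0 < z ->
  BesselI nu z <= 16 / Gamma (1/2) * exp z * (Rpower z nu + Rpower z (-1/2)).
Proof.
  intros Hz. eapply Rle_trans; [apply BesselI_le_Rpower_exp, Hz|].
  set (gam := -1/2 - nu).
  assert (Hg := Gamma_pos (1/2) ltac:(lra)).
  assert (Ha : Rpower (z / 2) nu <= 2 * Rpower z nu) by (apply Rpower_half_le; lra).
  assert (H2g : Rpower 2 gam <= 2).
  { rewrite <- (Rpower_1 2) at 2 by lra. apply Rle_Rpower; unfold gam; lra. }
  assert (Hb : Rpower (1 + z) gam <= 2 * (1 + Rpower z gam)).
  { pose proof (exp_pos (gam * ln z)). fold (Rpower z gam) in *.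
    destruct (Rle_lt_dec z 1).
    - apply Rle_trans with (Rpower 2 gam); [apply Rle_Rpower_l; unfold gam; lra | lra].
    - apply Rle_trans with (Rpower (2 * z) gam); [apply Rle_Rpower_l; unfold gam; lra|].
      rewrite <- Rpower_mult_distr by lra. nra. }
  assert (Hc : Rpower z nu * Rpower z gam = Rpower z (-1/2))
    by (rewrite <- Rpower_plus; f_equal; unfold gam; field).
  pose proof (exp_pos z). pose proof (exp_pos (nu * ln z)). pose proof (exp_pos (nu * ln (z / 2))).
  pose proof (exp_pos (gam * ln (1 + z))). pose proof (exp_pos (gam * ln z)).
  fold (Rpower z nu) (Rpower (z / 2) nu) (Rpower (1 + z) gam) (Rpower z gam) in *.
  rewrite <- Hc.
  set (g := Gamma (1/2)) in *.
  apply Rle_trans with (2 / g * (2 * Rpower z nu) * (2 * (2 * (1 + Rpower z gam)) * exp z)).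
  - assert (0 < 2 / g) by (apply Rdiv_lt_0_compat; lra).
    apply Rmult_le_compat; try nra.
  - right. field. lra.
Qed.

End BesselBound.

Lemma Rpower_weight_eq nu t a b : 0 < t -> 0 < a -> 0 < b ->
  Rpower t (- (1 + nu)) * Rpower (a * b) (1/2 + nu)
  = Rpower (a * a / t) (1 + nu) * (/ a * Rpower (a / b) (-1/2 - nu)).
Proof.
  intros Ht Ha Hb.
  assert (Hinv : / a = exp (- ln a)) by (rewrite exp_Ropp, exp_ln; [reflexivity | exact Ha]).
  unfold Rpower. rewrite Hinv. unfold Rdiv.
  rewrite !ln_mult, !ln_Rinv by (auto using Rinv_0_lt_compat, Rmult_lt_0_compat).
  rewrite <- !exp_plus. f_equal. field.
Qed.

Lemma weight_gauss_far_le nu t a b : -1 < nu < 0 -> 0 < t -> 0 < a -> 0 < b ->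
  a * a / 4 <= (a - b) ^ 2 ->
  Rpower t (- (1 + nu)) * Rpower (a * b) (1/2 + nu) * exp (- (a - b) ^ 2 / (8 * t))
  <= 32 * (/ a * Rpower (a / b) (-1/2 - nu)).
Proof.
  intros Hnu Ht Ha Hb Hab. rewrite Rpower_weight_eq by assumption.
  set (u := a * a / t). assert (Hu : 0 < u) by (apply Rdiv_lt_0_compat; nra).
  assert (HG : exp (- (a - b) ^ 2 / (8 * t)) <= exp (- u / 32)).
  { apply exp_le_compat. unfold u, Rdiv. rewrite !Ropp_mult_distr_l.
    apply (Rmult_le_reg_r (32 * t)); [lra|]. field_simplify; lra. }
  pose proof (Rpower_mul_exp_le u (1 + nu) Hu ltac:(lra)).
  set (R1 := / a * Rpower (a / b) (-1/2 - nu)).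
  assert (0 < R1) by (apply Rmult_lt_0_compat; [apply Rinv_0_lt_compat, Ha | apply exp_pos]).
  pose proof (exp_pos ((1 + nu) * ln u)). fold (Rpower u (1 + nu)) in *.
  apply Rle_trans with (R1 * (Rpower u (1 + nu) * exp (- u / 32))).
  - rewrite (Rmult_comm R1), !Rmult_assoc. apply Rmult_le_compat_l; [lra|].
    rewrite (Rmult_comm (exp _)). apply Rmult_le_compat_l; lra.
  - rewrite Rmult_comm. apply Rmult_le_compat_r; lra.
Qed.

(* When [y <= 2x] either [y^2 <= t], and the weight is [(y^2/t)^(1+nu)] times the second
   singular term, or [xy >= t/2], and the weight is at most [2 / sqrt t]. *)
Lemma weight_gauss_near_le nu t x y : -1 < nu <= -1/2 -> 0 < t -> 0 < x -> 0 < y -> y <= 2 * x ->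
  Rpower t (- (1 + nu)) * Rpower (x * y) (1/2 + nu) * exp (- (x - y) ^ 2 / (8 * t))
  <= 2 * (/ sqrt t * exp (- (x - y) ^ 2 / (8 * t))) + / y * Rpower (y / x) (-1/2 - nu).
Proof.
  intros Hnu Ht Hx Hy Hyx.
  set (G := exp (- (x - y) ^ 2 / (8 * t))). assert (HG : 0 < G) by apply exp_pos.
  assert (HG1 : G <= 1).
  { unfold G. rewrite <- exp_0. apply exp_le_compat.
    replace (- (x - y) ^ 2 / (8 * t)) with (- ((x - y) ^ 2 / (8 * t))) by (field; lra).
    assert (0 <= (x - y) ^ 2 / (8 * t)) by (apply Rdiv_le_0_compat; [apply pow2_ge_0 | lra]).
    lra. }
  assert (Hs : 0 < / sqrt t) by (apply Rinv_0_lt_compat, sqrt_lt_R0, Ht).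
  assert (HR : 0 < / y * Rpower (y / x) (-1/2 - nu))
    by (apply Rmult_lt_0_compat; [apply Rinv_0_lt_compat, Hy | apply exp_pos]).
  pose proof (exp_pos (- (1 + nu) * ln t)). pose proof (exp_pos ((1/2 + nu) * ln (x * y))).
  fold (Rpower t (- (1 + nu))) (Rpower (x * y) (1/2 + nu)) in *.
  destruct (Rle_lt_dec (y * y) t) as [Hsmall|Hlarge].
  - rewrite Rmult_comm with (r1 := x), Rpower_weight_eq by assumption.
    assert (Rpower (y * y / t) (1 + nu) <= 1).
    { apply Rle_trans with (Rpower 1 (1 + nu)); [|rewrite Rpower_1_l; lra].
      apply Rle_Rpower_l; [lra|]. split.
      - apply Rdiv_lt_0_compat; nra.
      - apply (Rmult_le_reg_r t); [exact Ht|]. unfold Rdiv.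
        rewrite Rmult_assoc, Rinv_l; lra. }
    pose proof (exp_pos ((1 + nu) * ln (y * y / t))). fold (Rpower (y * y / t) (1 + nu)) in *.
    assert (Rpower (y * y / t) (1 + nu) * (/ y * Rpower (y / x) (-1/2 - nu)) * G
            <= 1 * (/ y * Rpower (y / x) (-1/2 - nu)) * 1)
      by (apply Rmult_le_compat; [nra | lra | apply Rmult_le_compat_r; lra | lra]).
    assert (0 < / sqrt t * G) by (apply Rmult_lt_0_compat; assumption).
    lra.
  - assert (Hw : Rpower (x * y) (1/2 + nu) <= 2 * Rpower t (1/2 + nu)).
    { eapply Rle_trans; [apply (Rpower_le_contravar (t / 2)); nra|].
      apply Rpower_half_le; lra. }
    assert (Ht' : Rpower t (- (1 + nu)) * Rpower t (1/2 + nu) = / sqrt t).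
    { rewrite <- Rpower_plus, <- Rpower_neg_half by exact Ht. f_equal. field. }
    assert (Rpower t (- (1 + nu)) * Rpower (x * y) (1/2 + nu) * G
            <= Rpower t (- (1 + nu)) * (2 * Rpower t (1/2 + nu)) * G)
      by (apply Rmult_le_compat_r; [lra | apply Rmult_le_compat_l; lra]).
    replace (Rpower t (- (1 + nu)) * (2 * Rpower t (1/2 + nu)) * G)
      with (2 * (Rpower t (- (1 + nu)) * Rpower t (1/2 + nu) * G)) in * by ring.
    rewrite Ht' in *. lra.
Qed.

Lemma weight_gauss_le nu t x y : -1 < nu <= -1/2 -> 0 < t -> 0 < x -> 0 < y ->
  Rpower t (- (1 + nu)) * Rpower (x * y) (1/2 + nu) * exp (- (x - y) ^ 2 / (8 * t)) <=
  32 * ( / sqrt t * exp (- (x - y) ^ 2 / (8 * t))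
       + / x * Rpower (x / y) (-1/2 - nu) * chi (Rlt_dec y (x / 2))
       + / y * Rpower (y / x) (-1/2 - nu) * chi (Rle_dec (x / 2) y) ).
Proof.
  intros Hnu Ht Hx Hy.
  assert (HGs : 0 < / sqrt t * exp (- (x - y) ^ 2 / (8 * t)))
    by (apply Rmult_lt_0_compat; [apply Rinv_0_lt_compat, sqrt_lt_R0, Ht | apply exp_pos]).
  assert (HR1 : 0 < / x * Rpower (x / y) (-1/2 - nu))
    by (apply Rmult_lt_0_compat; [apply Rinv_0_lt_compat, Hx | apply exp_pos]).
  assert (HR2 : 0 < / y * Rpower (y / x) (-1/2 - nu))
    by (apply Rmult_lt_0_compat; [apply Rinv_0_lt_compat, Hy | apply exp_pos]).
  unfold chi. destruct (Rlt_dec y (x / 2)) as [Hc1|Hc1], (Rle_dec (x / 2) y) as [Hc2|Hc2]; try lra.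
  - pose proof (weight_gauss_far_le nu t x y ltac:(lra) Ht Hx Hy ltac:(nra)). lra.
  - destruct (Rle_lt_dec (2 * x) y) as [Hfar|Hnear].
    + pose proof (weight_gauss_far_le nu t y x ltac:(lra) Ht Hy Hx ltac:(nra)).
      rewrite (Rmult_comm y x) in H. replace ((y - x) ^ 2) with ((x - y) ^ 2) in H by ring. lra.
    + pose proof (weight_gauss_near_le nu t x y Hnu Ht Hx Hy ltac:(lra)). lra.
Qed.

Lemma heat_scale_le t : 0 < t -> 2 * exp (-2 * t) / (1 - exp (-4 * t)) <= / t.
Proof.
  intros Ht. set (w := exp (-2 * t)).
  assert (Hw : 0 < w) by apply exp_pos.
  assert (Hr : exp (-4 * t) = w * w) by (unfold w; rewrite <- exp_plus; f_equal; ring).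
  assert (Hwe : w * exp (2 * t) = 1)
    by (unfold w; rewrite <- exp_plus, <- exp_0; f_equal; ring).
  assert (Hw1 : w <= 1) by (unfold w; rewrite <- exp_0; apply exp_le_compat; lra).
  pose proof (exp_ineq1_le (2 * t)).
  assert (Hsinh : 2 * t * w <= 1 - w * w) by nra.
  rewrite Hr. apply (Rmult_le_reg_r (t * (1 - w * w))); [nra|].
  replace (2 * w / (1 - w * w) * (t * (1 - w * w))) with (2 * t * w) by (field; nra).
  replace (/ t * (t * (1 - w * w))) with (1 - w * w) by (field; lra). exact Hsinh.
Qed.

Lemma heat_gauss_le t x y : 0 < t -> 0 < x -> 0 < y ->
  exp (- (1/2) * ((1 + exp (-4 * t)) / (1 - exp (-4 * t))) * (x ^ 2 + y ^ 2))
  * exp (2 * exp (-2 * t) / (1 - exp (-4 * t)) * (x * y))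
  <= exp (- (x - y) ^ 2 / (8 * t)).
Proof.
  intros Ht Hx Hy. rewrite <- exp_plus. apply exp_le_compat.
  set (w := exp (-2 * t)). assert (Hw : 0 < w) by apply exp_pos.
  assert (Hr : exp (-4 * t) = w * w) by (unfold w; rewrite <- exp_plus; f_equal; ring).
  rewrite Hr.
  assert (Hw1 : w * w < 1).
  { rewrite <- Hr, <- exp_0. apply exp_increasing. lra. }
  assert (H4t : 1 - w * w <= 4 * t) by (rewrite <- Hr; pose proof (exp_ineq1_le (-4 * t)); lra).
  set (a := (1 + w * w) / (2 * (1 - w * w))).
  assert (Ha : / (8 * t) <= a).
  { apply Rle_trans with (/ (2 * (1 - w * w))); [apply Rinv_le_contravar; lra|].
    unfold a, Rdiv. rewrite <- (Rmult_1_l (/ (2 * (1 - w * w)))) at 1.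
    apply Rmult_le_compat_r; [left; apply Rinv_0_lt_compat|]; nra. }
  (* Completing the square: the exponent is [- a (x-y)^2 - (1-w)^2 xy / (1-w^2)]. *)
  replace (- (1/2) * ((1 + w * w) / (1 - w * w)) * (x ^ 2 + y ^ 2) + 2 * w / (1 - w * w) * (x * y))
    with (- (a * (x - y) ^ 2) - (1 - w) ^ 2 * (x * y) / (1 - w * w)) by (unfold a; field; lra).
  assert (0 <= (1 - w) ^ 2 * (x * y) / (1 - w * w))
    by (apply Rdiv_le_0_compat; [apply Rmult_le_pos; [apply pow2_ge_0 | nra] | lra]).
  assert (0 <= (a - / (8 * t)) * (x - y) ^ 2) by (apply Rmult_le_pos; [lra | apply pow2_ge_0]).
  replace (- (x - y) ^ 2 / (8 * t)) with (- (/ (8 * t) * (x - y) ^ 2)) by (field; lra).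
  lra.
Qed.

Lemma sqrt_mul_Rpower m X e : 0 < m -> 0 < X ->
  m * sqrt X * Rpower (m * X) e = Rpower m (1 + e) * Rpower X (1/2 + e).
Proof.
  intros Hm HX. replace (sqrt X) with (Rpower X (/ 2)) by (apply Rpower_sqrt, HX).
  rewrite <- (Rpower_1 m) at 1 by exact Hm.
  rewrite <- Rpower_mult_distr by assumption.
  replace (1/2 + e) with (/ 2 + e) by field.
  rewrite !Rpower_plus. ring.
Qed.

(* [m = 2 e^(-2t) / (1 - e^(-4t))] below is the [1 / sinh (2t)] of the header. *)
Lemma laguerre_heat_kernel_le nu t x y : -1 < nu <= -1/2 -> 0 < t -> 0 < x -> 0 < y ->
  laguerre_heat_kernel nu t x y <=
  16 / Gamma (1/2) * exp (- (x - y) ^ 2 / (8 * t))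
  * (Rpower t (- (1 + nu)) * Rpower (x * y) (1/2 + nu) + / sqrt t).
Proof.
  intros Hnu Ht Hx Hy. unfold laguerre_heat_kernel. cbv zeta.
  set (r := exp (-4 * t)). set (w := exp (-2 * t)).
  assert (Hw : 0 < w) by apply exp_pos.
  assert (Hr : r = w * w) by (unfold r, w; rewrite <- exp_plus; f_equal; ring).
  assert (Hr1 : r < 1) by (unfold r; rewrite <- exp_0; apply exp_increasing; lra).
  assert (Hsr : sqrt r = w) by (rewrite Hr; apply sqrt_square; lra).
  set (m := 2 * w / (1 - r)). assert (Hm : 0 < m) by (apply Rdiv_lt_0_compat; lra).
  set (X := x * y). assert (HX : 0 < X) by (apply Rmult_lt_0_compat; assumption).
  replace (2 * sqrt r / (1 - r) * x * y) with (m * X) by (unfold m, X; rewrite Hsr; field; lra).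
  replace (2 * sqrt (r * x * y) / (1 - r)) with (m * sqrt X)
    by (unfold m, X; replace (r * x * y) with (r * (x * y)) by ring;
        rewrite (sqrt_mult r), Hsr by nra; field; lra).
  set (E := exp (- (1 / 2) * ((1 + r) / (1 - r)) * (x ^ 2 + y ^ 2))).
  set (K := 16 / Gamma (1/2)).
  assert (HK : 0 < K) by (apply Rdiv_lt_0_compat; [lra | apply Gamma_pos; lra]).
  assert (HI := BesselI_le nu ltac:(lra) ltac:(lra) (m * X) ltac:(nra)). fold K in HI.
  assert (HEm := heat_gauss_le t x y Ht Hx Hy). fold r w m E X in HEm.
  assert (Hmt : m <= / t) by (apply heat_scale_le, Ht).
  assert (H1 := Rpower_le_of_le_inv m t (1 + nu) Hm Ht Hmt ltac:(lra)).
  assert (H2 := Rpower_le_of_le_inv m t (1 / 2) Hm Ht Hmt ltac:(lra)).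
  rewrite Rpower_neg_half in H2 by exact Ht.
  assert (HE : 0 < E) by apply exp_pos.
  assert (HsX : 0 < m * sqrt X) by (apply Rmult_lt_0_compat; [exact Hm | apply sqrt_lt_R0, HX]).
  apply Rle_trans with (m * sqrt X * E * (K * exp (m * X) * (Rpower (m * X) nu + Rpower (m * X) (-1/2))));
    [apply Rmult_le_compat_l; [nra | exact HI]|].
  replace (m * sqrt X * E * (K * exp (m * X) * (Rpower (m * X) nu + Rpower (m * X) (-1/2))))
    with (K * (E * exp (m * X))
          * (m * sqrt X * Rpower (m * X) nu + m * sqrt X * Rpower (m * X) (-1/2))) by ring.
  rewrite !sqrt_mul_Rpower by assumption.
  replace (1/2 + -1/2) with 0 by field. replace (1 + -1/2) with (1/2) by field.
  rewrite Rpower_O by exact HX.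
  pose proof (exp_pos ((1 / 2 + nu) * ln X)). fold (Rpower X (1/2 + nu)) in *.
  pose proof (exp_pos ((1 + nu) * ln m)). pose proof (exp_pos (1 / 2 * ln m)).
  fold (Rpower m (1 + nu)) (Rpower m (1/2)) in *.
  pose proof (exp_pos (m * X)).
  apply Rmult_le_compat; [apply Rmult_le_pos; [lra | nra] | nra | apply Rmult_le_compat_l; lra |].
  rewrite Rmult_1_r. apply Rplus_le_compat; [apply Rmult_le_compat_r; lra | exact H2].
Qed.

Theorem lemma3p2 (nu : R) (hnu1 : -1 < nu) (hnu2 : nu < -1/2) :
  let gam := -1/2 - nu in
  exists C c : R, 0 < C /\ 0 < c /\
    forall t x y : R, 0 < t -> 0 < x -> 0 < y ->
      laguerre_heat_kernel nu t x y <=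
      C * ( / sqrt t * exp (- (Rabs (x - y)) ^ 2 / (c * t))
          + / x * Rpower (x / y) gam * chi (Rlt_dec y (x / 2))
          + / y * Rpower (y / x) gam * chi (Rle_dec (x / 2) y) ).
Proof.
  intros gam. set (K := 16 / Gamma (1/2)).
  assert (HK : 0 < K) by (apply Rdiv_lt_0_compat; [lra | apply Gamma_pos; lra]).
  exists (33 * K), 8. split; [lra|]. split; [lra|].
  intros t x y Ht Hx Hy. rewrite pow2_abs.
  pose proof (laguerre_heat_kernel_le nu t x y ltac:(lra) Ht Hx Hy) as Hker.
  pose proof (weight_gauss_le nu t x y ltac:(lra) Ht Hx Hy) as Hw. fold K gam in Hker, Hw.
  set (G := exp (- (x - y) ^ 2 / (8 * t))) in *.
  set (W := Rpower t (- (1 + nu)) * Rpower (x * y) (1/2 + nu)) in *.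
  set (S1 := / x * Rpower (x / y) gam * chi (Rlt_dec y (x / 2))) in *.
  set (S2 := / y * Rpower (y / x) gam * chi (Rle_dec (x / 2) y)) in *.
  assert (0 <= S1) by (unfold S1; apply Rmult_le_pos; [left; apply Rmult_lt_0_compat;
    [apply Rinv_0_lt_compat, Hx | apply exp_pos] | unfold chi; destruct Rlt_dec; lra]).
  assert (0 <= S2) by (unfold S2; apply Rmult_le_pos; [left; apply Rmult_lt_0_compat;
    [apply Rinv_0_lt_compat, Hy | apply exp_pos] | unfold chi; destruct Rle_dec; lra]).
  assert (0 < / sqrt t * G)
    by (apply Rmult_lt_0_compat; [apply Rinv_0_lt_compat, sqrt_lt_R0, Ht | apply exp_pos]).
  eapply Rle_trans; [exact Hker|].
  replace (K * G * (W + / sqrt t)) with (K * (W * G + / sqrt t * G)) by ring.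
  replace (33 * K * (/ sqrt t * G + S1 + S2)) with (K * (33 * (/ sqrt t * G + S1 + S2))) by ring.
  apply Rmult_le_compat_l; lra.
Qed.
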